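(* Let $\mathcal{S}$ be a finite elation generalized quadrangle of order $(s,t)$ with elation group $G$ and associated $4$-gonal family $(G,\{A_i\}_{i=0}^t,\{A_i^*\}_{i=0}^t)$, and let $\Delta:=\sum_{i=0}^t (A_i\setminus\{1\})$, $\Delta^*:=\sum_{i=0}^t (A_i^*\setminus\{1\})$ in $\mathbb{R}[G]$. Let $\chi$ be a nonprincipal linear character of $G$, extended linearly to a ring homomorphism $\mathbb{R}[G]\to\mathbb{C}$, and let $u$ and $u'$ be the numbers of indices $i$ with $A_i\le\ker(\chi)$ and with $A_i^*\le \ker(\chi)$ respectively. Then \[\chi(\Delta)=su-t-1,\qquad \chi(\Delta^* )=stu'-t-1,\] and $(u,u')$ is one of $(1,1)$, $(0,0)$, $(\tfrac{t}{s}+1,0)$.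
   Context: A generalized quadrangle of order $(s,t)$: each line has $s+1$ points, each point is on $t+1$ lines, and for each non-incident point-line pair $(P,\ell)$ there is a unique point on $\ell$ collinear with $P$. An elation about $P$ is an automorphism that is the identity or fixes each line through $P$ and no point not collinear with $P$. $\mathcal{S}$ is an elation generalized quadrangle with base point $P$ and elation group $G$ if $G$ consists of elations about $P$ and acts regularly on the points not collinear with $P$. The associated $4$-gonal family: fix a point $y$ not collinear with $P$, let $M_0,\dots,M_t$ be the lines through $y$, let $z_i$ be the unique point of $M_i$ collinear with $P$, and let $A_i$, $A_i^*$ be the stabilizers in $G$ of $M_i$ and $z_i$ respectively. In $\mathbb{R}[G]$ a subset is identified with the sum of its elements. $\ker(\chi)=\{g:\chi(g)=\chi(1)\}$. *)

From mathcomp Require Import all_boot all_order all_algebra all_fingroup all_solvable all_field all_character.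
Set Implicit Arguments. Unset Strict Implicit. Unset Printing Implicit Defensive.
Import GRing.Theory Num.Theory.
Local Open Scope ring_scope.

Section GQ.
Variables (Pt Ln : finType) (inc : Pt -> Ln -> bool).

Definition collinear (x y : Pt) : bool := [exists l, inc x l && inc y l].

Definition is_GQ (s t : nat) : Prop :=
  [/\ (1 <= s)%N /\ (1 <= t)%N,
      (forall l, #|[set x | inc x l]| = s.+1),
      (forall x, #|[set l | inc x l]| = t.+1),
      (forall x y l m, x != y -> inc x l -> inc y l -> inc x m -> inc y m -> l = m)
    & (forall x l, ~~ inc x l -> exists! y, inc y l && collinear x y)].

Definition fixes_line (g : {perm Pt}) (l : Ln) : bool :=
  [forall x, inc x l == inc (g x) l].

(* g is an automorphism (collineation): it maps lines onto lines.
   (In a GQ with s >= 1 a line is determined by its point set, so the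
   action on points determines the automorphism.) *)
Definition collineation (g : {perm Pt}) : Prop :=
  forall l, exists l', forall x, inc x l = inc (g x) l'.

Definition elation (p0 : Pt) (g : {perm Pt}) : Prop :=
  g = 1%g \/
  ((forall l, inc p0 l -> fixes_line g l) /\
   (forall x, ~~ collinear p0 x -> g x != x)).

Definition is_EGQ (s t : nat) (p0 : Pt) (G : {group {perm Pt}}) : Prop :=
  [/\ is_GQ s t,
      (forall g, g \in G -> collineation g /\ elation p0 g)
    & (forall x y, ~~ collinear p0 x -> ~~ collinear p0 y ->
         exists! g, g \in G /\ g x = y)].

(* 4-gonal family attached to a point y not collinear with p0:
   for a line M through y, A_M = stabilizer of M in G,
   A*_M = stabilizer in G of z_M, the point of M collinear with p0. *)
Definition lineStab (G : {group {perm Pt}}) (M : Ln) : {set {perm Pt}} :=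
  [set g in G | fixes_line g M].

Definition zpt (p0 y : Pt) (M : Ln) : Pt :=
  odflt y [pick z | inc z M && collinear p0 z].

Definition pointStab (G : {group {perm Pt}}) (z : Pt) : {set {perm Pt}} :=
  [set g in G | g z == z].

Definition Delta (G : {group {perm Pt}}) (y : Pt) (chi : 'CF(G)) : algC :=
  \sum_(M | inc y M) \sum_(g in lineStab G M :\ 1%g) chi g.

Definition DeltaStar (G : {group {perm Pt}}) (p0 y : Pt) (chi : 'CF(G)) : algC :=
  \sum_(M | inc y M) \sum_(g in pointStab G (zpt p0 y M) :\ 1%g) chi g.

Definition u_count (G : {group {perm Pt}}) (y : Pt) (chi : 'CF(G)) : nat :=
  #|[set M | inc y M & lineStab G M \subset cfker chi]|.

Definition u'_count (G : {group {perm Pt}}) (p0 y : Pt) (chi : 'CF(G)) : nat :=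
  #|[set M | inc y M & pointStab G (zpt p0 y M) \subset cfker chi]|.

End GQ.

From mathcomp Require Import all_boot all_order all_algebra all_fingroup all_solvable all_field all_character.
From mathcomp Require Import ring.
Import GRing.Theory Num.Theory.
Set Implicit Arguments. Unset Strict Implicit.
Local Open Scope ring_scope.

(* Fix a line M through y, let z be its point collinear with p0, and write
   A_M, A*_M for the stabilizers of M and z. Regularity of G on the points
   not collinear with p0 makes g |-> g y a bijection, so |A_M| = s and
   |A*_M| = st, and every g outside A*_M factors uniquely as b h with b in
   A_M and h in A_N \ 1 for a line N <> M through y. Summing chi over this
   partition of G, and using that chi sums to |H| or 0 over a subgroup H
   according as H <= ker chi or not, gives
     0 = chi(A*_M) + chi(A_M) (Delta - chi(A_M) + 1).
   Counting the lines through y gives the values of Delta and Delta*. If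
   A_M <= ker chi the identity forces u = 1 when A*_M <= ker chi and
   u = t/s + 1 otherwise, while A_N <= A*_N gives u' <= u. *)

Section LinearCharacterSums.
Variables (gT : finGroupType) (G : {group gT}) (chi : 'CF(G)).
Hypothesis lin_chi : chi \is a linear_char.

Lemma sum_lin_char_subgroup (H : {group gT}) : H \subset G ->
  \sum_(g in H) chi g = if H \subset cfker chi then #|H|%:R else 0.
Proof.
move=> sHG; case: ifPn => [sHker | /subsetPn[h hH hker]].
  rewrite -sumr_const; apply: eq_bigr => g gH.
  by rewrite cfker1 ?lin_char1 // (subsetP sHker).
have hG := subsetP sHG h hH.
have chih : chi h != 1.
  apply: contra hker => /eqP chih.
  by rewrite cfkerEchar ?lin_charW // inE hG lin_char1 // chih eqxx.
have S_fixed : \sum_(g in H) chi g = chi h * \sum_(g in H) chi g.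
  rewrite {1}(reindex_inj (mulgI h)) big_distrr /=.
  apply: eq_big => [g | g]; rewrite groupMl // => gH.
  by rewrite lin_charM // (subsetP sHG).
have : (1 - chi h) * \sum_(g in H) chi g = 0 by rewrite mulrBl mul1r -S_fixed subrr.
by move/eqP; rewrite mulf_eq0 subr_eq0 eq_sym (negbTE chih) => /eqP.
Qed.

Lemma sum_lin_charD1 (H : {group gT}) :
  \sum_(g in H :\ 1%g) chi g = \sum_(g in H) chi g - 1.
Proof. by rewrite [in RHS](big_setD1 1%g) ?group1 //= lin_char1 // addrC addrK. Qed.

Lemma sum_nonprincipal_lin_char : chi != 1 -> \sum_(g in G) chi g = 0.
Proof.
move=> nontriv; rewrite sum_lin_char_subgroup //; case: ifP => // sGker.
case/eqP: nontriv; apply/cfun_inP => x xG.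
by rewrite cfun1E xG cfker1 ?lin_char1 // (subsetP sGker).
Qed.

End LinearCharacterSums.

Section Stabilizers.
Variables (Pt Ln : finType) (inc : Pt -> Ln -> bool) (G : {group {perm Pt}}).

Lemma lineStab_group_set M : group_set (lineStab inc G M).
Proof.
apply/group_setP; split=> [|a b].
  by rewrite inE group1; apply/forallP => x; rewrite perm1.
rewrite !inE => /andP[aG /forallP aM] /andP[bG /forallP bM].
by rewrite groupM //; apply/forallP => x; rewrite permM (eqP (aM x)) (bM (a x)).
Qed.
Canonical lineStab_group M := Group (lineStab_group_set M).

Lemma pointStab_group_set z : group_set (pointStab G z).
Proof.
apply/group_setP; split=> [|a b]; first by rewrite inE group1 perm1 eqxx.
by rewrite !inE => /andP[aG /eqP az] /andP[bG /eqP bz]; rewrite groupM // permM az bz eqxx.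
Qed.
Canonical pointStab_group z := Group (pointStab_group_set z).

Lemma lineStab_sub M : lineStab inc G M \subset G.
Proof. by apply/subsetP => g; rewrite inE => /andP[]. Qed.

Lemma lineStab_memG M g : g \in lineStab inc G M -> g \in G.
Proof. exact: subsetP (lineStab_sub M) g. Qed.

Lemma pointStab_sub z : pointStab G z \subset G.
Proof. by apply/subsetP => g; rewrite inE => /andP[]. Qed.

End Stabilizers.

Section GeneralizedQuadrangle.
Variables (Pt Ln : finType) (inc : Pt -> Ln -> bool).
Local Notation coll := (collinear inc).

Lemma collinearP a b : reflect (exists l, inc a l && inc b l) (coll a b).
Proof. exact: existsP. Qed.

Lemma collinear_sym a b : coll a b = coll b a.
Proof. by apply/collinearP/collinearP => -[l /andP[al bl]]; exists l; rewrite al bl. Qed.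

Lemma collinear_on_line a b l : inc a l -> inc b l -> coll a b.
Proof. by move=> al bl; apply/collinearP; exists l; rewrite al bl. Qed.

Variables (s t : nat).
Hypothesis gq : is_GQ inc s t.

Lemma GQ_s_gt0 : (0 < s)%N.
Proof. by case: gq => -[]. Qed.

Lemma GQ_t_gt0 : (0 < t)%N.
Proof. by case: gq => -[]. Qed.

Lemma card_line l : #|[set x | inc x l]| = s.+1.
Proof. by case: gq. Qed.

Lemma card_lines_through x : #|[set l | inc x l]| = t.+1.
Proof. by case: gq. Qed.

Lemma card_lineD1 l w : inc w l -> #|[set x | inc x l] :\ w| = s.
Proof. by move=> wl; have := cardsD1 w [set x | inc x l]; rewrite card_line inE wl => -[]. Qed.

Lemma card_lines_throughD1 x l : inc x l -> #|[set m | inc x m] :\ l| = t.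
Proof.
by move=> xl; have := cardsD1 l [set m | inc x m]; rewrite card_lines_through inE xl => -[].
Qed.

Lemma line_uniq x x' l m :
  x != x' -> inc x l -> inc x' l -> inc x m -> inc x' m -> l = m.
Proof. by case: gq => _ _ _ uniq _; apply: uniq. Qed.

Lemma exists_collinear_on_line x l : ~~ inc x l -> exists2 w, inc w l & coll x w.
Proof. by case: gq => _ _ _ _ /[apply] -[w [/andP[wl xw] _]]; exists w. Qed.

Lemma collinear_on_line_uniq x l a b :
  ~~ inc x l -> inc a l -> inc b l -> coll x a -> coll x b -> a = b.
Proof.
case: gq => _ _ _ _ /[apply] -[w [_ w_uniq]] al bl xa xb.
by rewrite -(w_uniq a) ?al ?xa // -(w_uniq b) ?bl ?xb.
Qed.

Lemma exists_two_lines_through x : exists l m, [/\ l != m, inc x l & inc x m].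
Proof.
have : (0 < #|[set l | inc x l]|)%N by rewrite card_lines_through.
case/card_gt0P => l; rewrite inE => xl.
have : (0 < #|[set m | inc x m] :\ l|)%N by rewrite card_lines_throughD1 // GQ_t_gt0.
by case/card_gt0P => m; rewrite !inE => /andP[ml xm]; exists l, m; rewrite eq_sym.
Qed.

Lemma card_collinear_off_line z L :
  inc z L -> #|[set w | coll z w & ~~ inc w L]| = (s * t)%N.
Proof.
move=> zL; pose lines := [set K | inc z K] :\ L; pose pts K := [set w | inc w K] :\ z.
pose S := [set p : Ln * Pt | (p.1 \in lines) && (p.2 \in pts p.1)].
have -> : [set w | coll z w & ~~ inc w L] = [set p.2 | p in S].
  apply/setP => w; rewrite inE; apply/andP/imsetP => [[/collinearP[K /andP[zK wK]] wL]|].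
    exists (K, w); rewrite // !inE /= zK wK !andbT.
    by apply/andP; split; [apply: contraNneq wL => <- | apply: contraNneq wL => ->].
  move=> [[K w'] + ->]; rewrite !inE /= => /andP[/andP[KL zK] /andP[wz wK]].
  rewrite (collinear_on_line zK wK); split=> //; apply: contra KL => wL.
  by apply/eqP; apply: (line_uniq wz).
rewrite card_in_imset => [|[K w] [K' w']]; last first.
  rewrite !inE /= => /andP[/andP[_ zK] /andP[wz wK]] /andP[/andP[_ zK'] /andP[_ wK']] /= ww'.
  by rewrite -ww' in wK' *; rewrite (line_uniq wz wK zK wK' zK').
have -> : #|S| = \sum_(K in lines) #|pts K|.
  rewrite -sum1_card (eq_bigl (fun p => (p.1 \in lines) && (p.2 \in pts p.1))) => [|p].
    rewrite -(pair_big_dep (mem lines) (fun K => mem (pts K)) (fun _ _ => 1%N)).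
    by apply: eq_bigr => K _; rewrite sum1_card.
  by rewrite inE.
have card_pts K : K \in lines -> #|pts K| = s.
  by rewrite !inE => /andP[_ zK]; apply: card_lineD1.
by rewrite (eq_bigr _ card_pts) sum_nat_const card_lines_throughD1 // mulnC.
Qed.

Lemma sum_lines_through_indicator (R : pzRingType) x (Q : pred Ln) (c : R) :
  \sum_(l | inc x l) ((if Q l then c else 0) - 1) =
    c * #|[set l | inc x l & Q l]|%:R - t%:R - 1.
Proof.
have sum_const (A : pred Ln) (d : R) : \sum_(l | A l) d = d *+ #|[set l | A l]|.
  by rewrite -sumr_const; apply: eq_bigl => l; rewrite inE.
by rewrite sumrB -big_mkcondr !sum_const card_lines_through mulr_natr -natr1 opprD addrA.
Qed.

End GeneralizedQuadrangle.

Section ElationGQ.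
Variables (Pt Ln : finType) (inc : Pt -> Ln -> bool) (s t : nat) (P : Pt).
Variable G : {group {perm Pt}}.
Hypothesis egq : is_EGQ inc s t P G.
Local Notation coll := (collinear inc).

Lemma EGQ_GQ : is_GQ inc s t.
Proof. by case: egq. Qed.

Lemma EGQ_collineation g : g \in G -> collineation inc g.
Proof. by move=> gG; case: egq => _ /(_ g gG) []. Qed.

Lemma EGQ_fix_line_base g l x : g \in G -> inc P l -> inc (g x) l = inc x l.
Proof.
move=> gG Pl; case: egq => _ /(_ g gG) [_ [->|[fix_lines _]]] _; first by rewrite perm1.
by rewrite (eqP (forallP (fix_lines l Pl) x)).
Qed.

Lemma EGQ_fix_base g : g \in G -> g P = P.
Proof.
move=> gG; have [l [m [lm Pl Pm]]] := exists_two_lines_through EGQ_GQ P.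
apply/eqP; apply: contraR lm => gPP; apply/eqP.
by apply: (line_uniq EGQ_GQ gPP); rewrite ?EGQ_fix_line_base.
Qed.

Lemma EGQ_collinear g a b : g \in G -> coll (g a) (g b) = coll a b.
Proof.
have coll_image h c d : h \in G -> coll c d -> coll (h c) (h d).
  move=> /EGQ_collineation h_coll /collinearP[l /andP[cl dl]].
  by have [l' hl'] := h_coll l; apply/collinearP; exists l'; rewrite -!hl' cl dl.
move=> gG; apply/idP/idP; last exact: coll_image.
by move/(coll_image _ _ _ (groupVr gG)); rewrite !permK.
Qed.

Lemma EGQ_collinear_base g a : g \in G -> coll P (g a) = coll P a.
Proof. by move=> gG; rewrite -{1}(EGQ_fix_base gG) EGQ_collinear. Qed.

Lemma EGQ_regular_inj g h x :
  g \in G -> h \in G -> ~~ coll P x -> g x = h x -> g = h.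
Proof.
move=> gG hG Px gxhx; have Pgx : ~~ coll P (g x) by rewrite EGQ_collinear_base.
case: egq => _ _ /(_ x (g x) Px Pgx) [k [_ k_uniq]].
by rewrite -(k_uniq g) // -(k_uniq h).
Qed.

Lemma EGQ_regular_ex x w : ~~ coll P x -> ~~ coll P w -> exists2 g, g \in G & g x = w.
Proof. by move=> Px Pw; case: egq => _ _ /(_ x w Px Pw) [g [[gG gxw] _]]; exists g. Qed.

Lemma card_EGQ_preimage x (Q : pred Pt) :
  ~~ coll P x -> #|[set g in G | Q (g x)]| = #|[set w | ~~ coll P w & Q w]|.
Proof.
move=> Px; rewrite -(@card_in_imset _ _ (fun g : {perm Pt} => g x)); last first.
  by move=> g h; rewrite !inE => /andP[gG _] /andP[hG _]; apply: EGQ_regular_inj.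
apply: eq_card => w; rewrite inE; apply/imsetP/andP => [[g + ->]|[Pw Qw]].
  by rewrite inE => /andP[gG Qg]; rewrite EGQ_collinear_base.
have [g gG gxw] := EGQ_regular_ex Px Pw.
by exists g; rewrite // inE gG gxw.
Qed.

Lemma EGQ_fixpoint_free h x : h \in G -> h != 1%g -> ~~ coll P x -> h x != x.
Proof.
move=> hG h1 Px; apply: contra h1 => /eqP hx; apply/eqP.
by apply: (EGQ_regular_inj hG (group1 G) Px); rewrite perm1.
Qed.

Section Flag.
Variable y : Pt.
Hypothesis Py : ~~ coll P y.
Local Notation z := (zpt inc P y).

Lemma base_notin_line M : inc y M -> ~~ inc P M.
Proof. by move=> yM; apply: contra Py => PM; apply: collinear_on_line PM yM. Qed.

Lemma zpt_spec M : inc y M -> inc (z M) M && coll P (z M).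
Proof.
move=> yM; rewrite /zpt; case: pickP => [w //|none] /=.
have [w wM Pw] := exists_collinear_on_line EGQ_GQ (base_notin_line yM).
by have := none w; rewrite wM Pw.
Qed.

Lemma zpt_on_line M : inc y M -> inc (z M) M.
Proof. by case/zpt_spec/andP. Qed.

Lemma zpt_collinear_base M : inc y M -> coll P (z M).
Proof. by case/zpt_spec/andP. Qed.

Lemma zpt_uniq M w : inc y M -> inc w M -> coll P w -> w = z M.
Proof.
move=> yM wM Pw; apply: (collinear_on_line_uniq EGQ_GQ (base_notin_line yM)) => //.
  exact: zpt_on_line.
exact: zpt_collinear_base.
Qed.

Lemma neq_zpt M w : inc y M -> ~~ coll P w -> w != z M.
Proof. by move=> yM; apply: contraNneq => ->; apply: zpt_collinear_base. Qed.

Lemma base_neq_zpt M : inc y M -> P != z M.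
Proof. by move=> yM; apply: contraNneq (base_notin_line yM) => ->; apply: zpt_on_line. Qed.

Lemma EGQ_fix_zpt M g : inc y M -> g \in G -> coll (g y) (z M) -> g (z M) = z M.
Proof.
move=> yM gG gyz; case/collinearP: (zpt_collinear_base yM) => L /andP[PL zL].
have gyL : ~~ inc (g y) L.
  by apply: contra Py => gyL; rewrite -(EGQ_collinear_base y gG) (collinear_on_line PL gyL).
apply: (collinear_on_line_uniq EGQ_GQ gyL); rewrite ?EGQ_fix_line_base //.
by rewrite EGQ_collinear // (collinear_on_line yM (zpt_on_line yM)).
Qed.

Lemma lineStabE M g : inc y M -> (g \in lineStab inc G M) = (g \in G) && inc (g y) M.
Proof.
move=> yM; rewrite inE; apply/andP/andP => [[gG /forallP gM]|[gG gyM]].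
  by rewrite -(eqP (gM y)).
split=> //; have gz := EGQ_fix_zpt yM gG (collinear_on_line gyM (zpt_on_line yM)).
have [M' gMM'] := EGQ_collineation gG M.
have gy_neq_z : g y != z M by apply: neq_zpt; rewrite ?EGQ_collinear_base.
have MM' : M = M'.
  apply: (line_uniq EGQ_GQ gy_neq_z gyM (zpt_on_line yM)); first by rewrite -gMM'.
  by rewrite -gz -gMM' zpt_on_line.
by apply/forallP => x; rewrite gMM' -MM' eqxx.
Qed.

Lemma pointStabE M g : inc y M -> (g \in pointStab G (z M)) = (g \in G) && coll (g y) (z M).
Proof.
move=> yM; rewrite inE; apply/andP/andP => [[gG /eqP gz]|[gG gyz]]; split=> //.
  by rewrite -gz EGQ_collinear // (collinear_on_line yM (zpt_on_line yM)).
by rewrite EGQ_fix_zpt.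
Qed.

Lemma lineStab_sub_pointStab M : inc y M -> lineStab inc G M \subset pointStab G (z M).
Proof.
move=> yM; apply/subsetP => g; rewrite lineStabE // pointStabE // => /andP[-> gyM].
exact: collinear_on_line gyM (zpt_on_line yM).
Qed.

Lemma card_lineStab M : inc y M -> #|lineStab inc G M| = s.
Proof.
move=> yM; have -> : #|lineStab inc G M| = #|[set w | ~~ coll P w & inc w M]|.
  by rewrite -(card_EGQ_preimage _ Py); apply: eq_card => g; rewrite lineStabE // inE.
rewrite -(card_lineD1 EGQ_GQ (zpt_on_line yM)); apply: eq_card => w; rewrite !inE.
case wM: (inc w M); rewrite ?andbT ?andbF //.
apply/idP/idP => [|wz]; first exact: neq_zpt.
by apply: contra wz => Pw; rewrite (zpt_uniq yM wM Pw).
Qed.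

Lemma card_pointStab M : inc y M -> #|pointStab G (z M)| = (s * t)%N.
Proof.
move=> yM; have -> : #|pointStab G (z M)| = #|[set w | ~~ coll P w & coll w (z M)]|.
  by rewrite -(card_EGQ_preimage _ Py); apply: eq_card => g; rewrite pointStabE // inE.
case/collinearP: (zpt_collinear_base yM) => L /andP[PL zL].
rewrite -(card_collinear_off_line EGQ_GQ zL); apply: eq_card => w.
rewrite !inE [coll w _]collinear_sym.
case zw: (coll (z M) w); rewrite ?andbT ?andbF //.
apply/idP/idP => [|wL]; first by apply: contra => /(collinear_on_line PL).
apply/negP => Pw; case/eqP: (base_neq_zpt yM).
by apply: (collinear_on_line_uniq EGQ_GQ wL PL zL); rewrite collinear_sym.
Qed.

Section Factorization.
Variable M : Ln.
Hypothesis yM : inc y M.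

(* (N, h, b) stands for the element b * h of A_M (A_N \ 1). *)
Definition factor_triple (x : Ln * {perm Pt} * {perm Pt}) : bool :=
  let: (N, h, b) := x in
  [&& inc y N, N != M, h \in lineStab inc G N :\ 1%g & b \in lineStab inc G M].

Lemma inv_point_off_line g : g \in G :\: pointStab G (z M) -> ~~ inc (g^-1%g y) M.
Proof.
rewrite inE => /andP[gA gG]; apply: contra gA => giyM.
rewrite -[g]invgK groupV; apply: (subsetP (lineStab_sub_pointStab yM)).
by rewrite lineStabE // groupV gG.
Qed.

Lemma factor_notin_pointStab N h b :
  factor_triple (N, h, b) -> (b * h)%g \in G :\: pointStab G (z M).
Proof.
case/and4P => yN NM; rewrite in_setD1 => /andP[h1 hA] bA.
have [hG bG] := (lineStab_memG hA, lineStab_memG bA).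
have bz : b (z M) = z M.
  by move/(subsetP (lineStab_sub_pointStab yM)): bA; rewrite inE => /andP[_ /eqP].
have zN : ~~ inc (z M) N.
  apply: contra NM => zN; apply/eqP.
  exact: (line_uniq EGQ_GQ (neq_zpt yM Py) yN zN yM (zpt_on_line yM)).
have hyN : inc (h y) N by move: hA; rewrite lineStabE // => /andP[].
have zy := collinear_on_line (zpt_on_line yM) yM.
rewrite !inE groupM // andbT permM bz.
apply: contra (EGQ_fixpoint_free hG h1 Py) => /eqP hz; apply/eqP.
apply: (collinear_on_line_uniq EGQ_GQ zN hyN yN) => //.
by rewrite -{1}hz EGQ_collinear.
Qed.

Lemma factor_point N h b :
  factor_triple (N, h, b) -> inc (b^-1%g y) M /\ coll ((b * h)^-1%g y) (b^-1%g y).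
Proof.
case/and4P => yN _; rewrite in_setD1 => /andP[_ hA] bA.
have [hG bG] := (lineStab_memG hA, lineStab_memG bA).
have biA : b^-1%g \in lineStab inc G M by rewrite groupV.
split; first by move: biA; rewrite lineStabE // => /andP[].
rewrite -(EGQ_collinear _ _ (groupM bG hG)) permKV permM permKV.
by move: hA; rewrite lineStabE // => /andP[_ /(collinear_on_line yN)].
Qed.

Lemma factor_inj : {in factor_triple &, injective (fun x => x.2 * x.1.2)%g}.
Proof.
move=> [[N h] b] [[N' h'] b'] fx fx' /= bh_eq.
have giy := inv_point_off_line (factor_notin_pointStab fx).
have [bM gb] := factor_point fx; have [bM' gb'] := factor_point fx'.
rewrite bh_eq in giy gb.
case/and4P: fx => yN _; rewrite in_setD1 => /andP[h1 hA] bA.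
case/and4P: fx' => yN' _; rewrite in_setD1 => /andP[_ hA'] bA'.
have bb' : b = b'.
  apply: invg_inj; apply: (EGQ_regular_inj _ _ Py); rewrite ?groupV ?(lineStab_memG bA) ?(lineStab_memG bA') //.
  exact: (collinear_on_line_uniq EGQ_GQ giy bM bM' gb gb').
rewrite -bb' in bh_eq hA' *; have hh' := mulgI b _ _ bh_eq; rewrite -hh' in hA' *.
have hG := lineStab_memG hA.
have [hyN hyN'] : inc (h y) N /\ inc (h y) N'.
  by move: hA hA'; rewrite !lineStabE // => /andP[_ ->] /andP[_ ->].
by rewrite (line_uniq EGQ_GQ (EGQ_fixpoint_free hG h1 Py) hyN yN hyN' yN').
Qed.

Lemma factor_surj g :
  g \in G :\: pointStab G (z M) -> exists2 x, factor_triple x & g = (x.2 * x.1.2)%g.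
Proof.
move=> gAc; have giy := inv_point_off_line gAc.
move: gAc; rewrite inE => /andP[gA gG].
have [m mM gm] := exists_collinear_on_line EGQ_GQ giy.
have Pm : ~~ coll P m.
  apply: contra gA => Pm; rewrite -[g]invgK groupV pointStabE // groupV gG /=.
  by rewrite -(zpt_uniq yM mM Pm).
have [b bG bym] := EGQ_regular_ex Py Pm.
have bA : b \in lineStab inc G M by rewrite lineStabE // bG bym.
pose h := (b * g)%g; have hG : h \in G by rewrite groupM.
have gE : g = (b^-1 * h)%g by rewrite mulKg.
have [N /andP[yN hyN]] : exists N, inc y N && inc (h y) N.
  by apply/collinearP; rewrite permM bym -{1}(permKV g y) EGQ_collinear.
have hAM : h \notin lineStab inc G M.
  apply: contra gA => hA; apply: (subsetP (lineStab_sub_pointStab yM)).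
  by rewrite gE groupM ?groupV.
exists (N, h, b^-1%g) => //.
rewrite /factor_triple yN groupV bA in_setD1 (lineStabE _ yN) hG hyN !andbT /=.
apply/andP; split; last by apply: contraNneq hAM => ->; rewrite group1.
by apply: contraNneq hAM => <-; rewrite (lineStabE _ yN) hG.
Qed.

Lemma pointStab_compl_factor :
  G :\: pointStab G (z M) = [set (x.2 * x.1.2)%g | x in factor_triple].
Proof.
apply/setP => g; apply/idP/imsetP => [/factor_surj[x fx ->]|[[[N h] b] fx ->]].
  by exists x.
exact: factor_notin_pointStab fx.
Qed.

Lemma big_EGQ_factor (V : nmodType) (F : {perm Pt} -> V) :
  \sum_(g in G) F g = \sum_(g in pointStab G (z M)) F g +
    \sum_(N | inc y N && (N != M)) \sum_(h in lineStab inc G N :\ 1%g)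
      \sum_(b in lineStab inc G M) F (b * h)%g.
Proof.
rewrite (big_setID (pointStab G (z M))) (setIidPr (pointStab_sub _ _)) /=.
rewrite pointStab_compl_factor big_imset /=; last exact: factor_inj.
rewrite (pair_big_dep (fun N => inc y N && (N != M)) (fun N h => h \in lineStab inc G N :\ 1%g)
  (fun _ h => \sum_(b in lineStab inc G M) F (b * h)%g)).
rewrite (pair_big_dep _ (fun _ b => b \in lineStab inc G M) (fun p b => F (b * p.2)%g)) /=.
by congr (_ + _); apply: eq_bigl => -[[N h] b]; rewrite unfold_in /= -!andbA.
Qed.

End Factorization.

Section Character.
Variable chi : 'CF(G).
Hypothesis lin_chi : chi \is a linear_char.
Local Notation u := (u_count inc y chi).
Local Notation u' := (u'_count inc P y chi).

Lemma sum_lineStab M : inc y M ->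
  \sum_(g in lineStab inc G M) chi g = if lineStab inc G M \subset cfker chi then s%:R else 0.
Proof. by move=> yM; rewrite sum_lin_char_subgroup ?lineStab_sub ?card_lineStab. Qed.

Lemma sum_pointStab M : inc y M ->
  \sum_(g in pointStab G (z M)) chi g =
    if pointStab G (z M) \subset cfker chi then (s * t)%:R else 0.
Proof. by move=> yM; rewrite sum_lin_char_subgroup ?pointStab_sub ?card_pointStab. Qed.

Lemma Delta_eq : Delta inc y chi = s%:R * u%:R - t%:R - 1.
Proof.
rewrite -(sum_lines_through_indicator EGQ_GQ _ (fun M => lineStab inc G M \subset cfker chi)).
by apply: eq_bigr => M yM; rewrite sum_lin_charD1 // sum_lineStab.
Qed.

Lemma DeltaStar_eq : DeltaStar inc P y chi = (s * t)%:R * u'%:R - t%:R - 1.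
Proof.
rewrite -(sum_lines_through_indicator EGQ_GQ _ (fun M => pointStab G (z M) \subset cfker chi)).
by apply: eq_bigr => M yM; rewrite sum_lin_charD1 // sum_pointStab.
Qed.

Lemma u'_count_le : (u' <= u)%N.
Proof.
apply: subset_leq_card; apply/subsetP => N; rewrite !inE => /andP[yN sker].
by rewrite yN (subset_trans (lineStab_sub_pointStab yN) sker).
Qed.

Hypothesis nontriv : chi != 1.

Lemma sum_lin_char_factorization M : inc y M ->
  \sum_(g in pointStab G (z M)) chi g + (\sum_(b in lineStab inc G M) chi b) *
    \sum_(N | inc y N && (N != M)) \sum_(h in lineStab inc G N :\ 1%g) chi h = 0.
Proof.
move=> yM; rewrite -[RHS](sum_nonprincipal_lin_char lin_chi nontriv) (big_EGQ_factor yM).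
congr (_ + _); rewrite mulr_sumr; apply: eq_bigr => N /andP[yN _].
rewrite mulr_sumr; apply: eq_bigr => h; rewrite in_setD1 => /andP[_ hA].
rewrite mulr_suml; apply: eq_bigr => b bA.
by rewrite lin_charM ?(lineStab_memG hA) ?(lineStab_memG bA).
Qed.

Lemma sum_pointStab_Delta M : inc y M -> lineStab inc G M \subset cfker chi ->
  \sum_(g in pointStab G (z M)) chi g + s%:R * (Delta inc y chi - s%:R + 1) = 0.
Proof.
move=> yM AMker; apply: etrans (sum_lin_char_factorization yM).
rewrite sum_lineStab // AMker; congr (_ + _ * _).
by rewrite /Delta (bigD1 M) //= sum_lin_charD1 // sum_lineStab // AMker; ring.
Qed.

Lemma s_neq0 : s%:R != 0 :> algC.
Proof. by rewrite pnatr_eq0 -lt0n (GQ_s_gt0 EGQ_GQ). Qed.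

Lemma u_count_eq1 : (0 < u')%N -> u = 1%N.
Proof.
case/card_gt0P => M; rewrite inE => /andP[yM A'ker].
have := sum_pointStab_Delta yM (subset_trans (lineStab_sub_pointStab yM) A'ker).
rewrite sum_pointStab // A'ker Delta_eq.
have -> : (s * t)%:R + s%:R * (s%:R * u%:R - t%:R - 1 - s%:R + 1) =
          s%:R ^+ 2 * (u%:R - 1) :> algC by rewrite natrM; ring.
by move/eqP; rewrite mulf_eq0 expf_eq0 (negbTE s_neq0) andbF subr_eq0 pnatr_eq1 => /eqP.
Qed.

Lemma u_count_eq : u' = 0%N -> (0 < u)%N -> u%:R = t%:R / s%:R + 1 :> algC.
Proof.
move=> u'0 /card_gt0P[M]; rewrite inE => /andP[yM Aker].
have A'nker : ~~ (pointStab G (z M) \subset cfker chi).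
  apply/negP => A'ker; suff : (0 < u')%N by rewrite u'0.
  by apply/card_gt0P; exists M; rewrite inE yM.
have := sum_pointStab_Delta yM Aker; rewrite sum_pointStab // (negbTE A'nker) add0r Delta_eq.
move/eqP; rewrite mulf_eq0 (negbTE s_neq0) /= => /eqP su_eq.
apply: (mulfI s_neq0); rewrite mulrDr mulr1 mulrCA divff ?s_neq0 // mulr1.
by apply/eqP; rewrite -subr_eq0 -su_eq; apply/eqP; ring.
Qed.

End Character.
End Flag.
End ElationGQ.

Theorem proposition2p4 (Pt Ln : finType) (inc : Pt -> Ln -> bool) (s t : nat)
    (p0 : Pt) (G : {group {perm Pt}}) (y : Pt) (chi : 'CF(G)) :
  is_EGQ inc s t p0 G ->
  ~~ collinear inc p0 y ->
  chi \is a linear_char ->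
  chi != 1 ->
  let u := u_count inc y chi in
  let u' := u'_count inc p0 y chi in
  [/\ Delta inc y chi = s%:R * u%:R - t%:R - 1,
      DeltaStar inc p0 y chi = (s * t)%:R * u'%:R - t%:R - 1
    & [\/ (u = 1%N /\ u' = 1%N),
          (u = 0%N /\ u' = 0%N)
        | (u%:R = t%:R / s%:R + 1 :> algC) /\ u' = 0%N]].
Proof.
move=> egq Py lin_chi nontriv u u'.
split; [exact: (Delta_eq egq Py lin_chi) | exact: (DeltaStar_eq egq Py lin_chi) |].
have [u'0 | u'_gt0] := posnP u'.
  have [u0 | u_gt0] := posnP u; first exact: Or32.
  by apply: Or33; split=> //; apply: (u_count_eq egq Py lin_chi nontriv u'0 u_gt0).
have u1 : u = 1%N := u_count_eq1 egq Py lin_chi nontriv u'_gt0.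
by apply: Or31; split=> //; apply/eqP; rewrite eqn_leq u'_gt0 -u1 (u'_count_le egq Py chi).
Qed.
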